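(* Assume AM defends every real machine, i.e. $d_r=e_r$ for all $r\in\mathcal M$ (so $D=1$). Let $\pi^*$ be the naive AM strategy with $\pi^*_m=e_m$ for every $m\in\mathcal M$ (the strategy called Existence). Then: (i) the M strategy $\rho$ with $\rho_m=\tfrac12$ for all $m\in\mathcal M$ is a best response of M to $\pi^*$, and $\max_{\rho\in[0,1]^{\mathcal M}}u_M(\pi^*,\rho)=\tfrac14$, so that $u_{AM}(\pi^*,\rho)=\tfrac34$ for every best response $\rho$ to $\pi^*$; (ii) for every naive AM strategy $\pi$ and every best response $\rho$ of M to $\pi$, $u_{AM}(\pi,\rho)\le\tfrac34$. Consequently, Existence, together with a best response of M, is an AM-optimal equilibrium among naive AM strategies.
   Context: Let $\mathcal M$ be a finite nonempty set of machine (environment) types. Let $e\in[0,1]^{\mathcal M}$ with $\sum_{r\in\mathcal M}e_r=1$ ($e_r$ is the fraction of all real machines that are of type $r$), and $d\in[0,1]^{\mathcal M}$ with $0\le d_r\le e_r$ ($d_r$ is the fraction of all real machines that are of type $r$ and defended by the anti-malware AM); put $D=\sum_{r}d_r$. An AM strategy $\pi$ assigns to each real machine type $r\in\mathcal M$ a vector $\pi^r\in[0,1]^{\mathcal M}$ with $\sum_{m}\pi^r_m\le 1$ ($\pi^r_m$ is the probability that AM creates a sandbox of type $m$ on a defended real machine of type $r$; with probability $1-\sum_m\pi^r_m$ no sandbox is created). AM's strategy is naive if $\pi^r$ does not depend on $r$; then we write $\pi_m$ for $\pi^r_m$. A malware (M) strategy is a vector $\rho\in[0,1]^{\mathcal M}$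 ($\rho_m$ is the probability M attacks when it perceives environment $m$). The utilities are $$u_M(\pi,\rho)=\sum_{r\in\mathcal M}\Big[(e_r-d_r)\rho_r+d_r\Big(1-\sum_{m\in\mathcal M}\pi^r_m\rho_m\Big)\rho_r\Big],$$ $$u_{AM}(\pi,\rho)=\sum_{r\in\mathcal M}d_r\Big[\sum_{m\in\mathcal M}\big(\pi^r_m\rho_m+\pi^r_m(1-\rho_m)(1-\rho_r)\big)+\Big(1-\sum_{m\in\mathcal M}\pi^r_m\Big)(1-\rho_r)\Big].$$ A best response of M to $\pi$ is any $\rho\in\arg\max_{\hat\rho\in[0,1]^{\mathcal M}}u_M(\pi,\hat\rho)$. A pair $(\pi,\rho)$ with $\rho$ a best response to $\pi$ is an equilibrium; it is AM-optimal within a class of AM strategies if $\pi$ lies in the class and $u_{AM}(\pi,\rho)\ge u_{AM}(\pi',\rho')$ for every equilibrium $(\pi',\rho')$ with $\pi'$ in the class. *)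

From HB Require Import structures.
From mathcomp Require Import all_boot all_order all_algebra.
From mathcomp Require Import reals.
Set Implicit Arguments. Unset Strict Implicit. Unset Printing Implicit Defensive.
Import Order.TTheory GRing.Theory Num.Theory.
Local Open Scope ring_scope.

Section Game.
Variables (R : realType) (M : finType).

(* e r : fraction of real machines of type r *)
Definition valid_e (e : M -> R) : Prop :=
  (forall r, 0 <= e r <= 1) /\ \sum_(r : M) e r = 1.

(* d r : fraction of machines of type r defended; 0 <= d r <= e r *)
Definition valid_d (e d : M -> R) : Prop := forall r, 0 <= d r <= e r.

(* AM strategy: pi r m = prob. of sandbox of type m on real machine of type r *)
Definition AM_strategy (pi : M -> M -> R) : Prop :=
  (forall r m, 0 <= pi r m <= 1) /\ (forall r, \sum_(m : M) pi r m <= 1).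

Definition naive (pi : M -> M -> R) : Prop :=
  forall r1 r2 m, pi r1 m = pi r2 m.

Definition M_strategy (rho : M -> R) : Prop := forall m, 0 <= rho m <= 1.

Definition uM (e d : M -> R) (pi : M -> M -> R) (rho : M -> R) : R :=
  \sum_(r : M) ((e r - d r) * rho r
                + d r * (1 - \sum_(m : M) pi r m * rho m) * rho r).

Definition uAM (d : M -> R) (pi : M -> M -> R) (rho : M -> R) : R :=
  \sum_(r : M) d r *
    (\sum_(m : M) (pi r m * rho m + pi r m * (1 - rho m) * (1 - rho r))
     + (1 - \sum_(m : M) pi r m) * (1 - rho r)).

Definition best_response (e d : M -> R) (pi : M -> M -> R) (rho : M -> R) : Prop :=
  M_strategy rho /\
  forall rho', M_strategy rho' -> uM e d pi rho' <= uM e d pi rho.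

Definition AM_optimal_in (cls : (M -> M -> R) -> Prop) (e d : M -> R)
  (pi : M -> M -> R) (rho : M -> R) : Prop :=
  cls pi /\ best_response e d pi rho /\
  forall pi' rho', cls pi' -> best_response e d pi' rho' ->
    uAM d pi' rho' <= uAM d pi rho.

Definition naive_AM (pi : M -> M -> R) : Prop := AM_strategy pi /\ naive pi.

End Game.

From HB Require Import structures.
From mathcomp Require Import all_boot all_order all_algebra.
From mathcomp Require Import reals.
From mathcomp Require Import ring lra.
Import Order.TTheory GRing.Theory Num.Theory.
Local Open Scope ring_scope.

(* When every machine is defended the game is constant-sum: uAM = 1 - uM.
   Attacking with probability 1/2 everywhere guarantees M at least 1/4 against
   any AM strategy, because each real machine carries at most one sandbox in
   total; hence AM never gets more than 3/4.  Against Existence the perceived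
   environment has the same law as the real one, so uM = y (1 - y) with
   y = sum_m e_m rho_m, which is at most 1/4, with equality at rho = 1/2. *)

Section FullDefense.
Context {R : realType} {M : finType} {e d : M -> R}.
Hypothesis d_eq_e : forall r, d r = e r.

Lemma uAM_full_defense pi rho :
  uAM d pi rho = \sum_(r : M) e r - uM e d pi rho.
Proof.
rewrite /uAM /uM -sumrB; apply: eq_bigr => r _; rewrite d_eq_e.
rewrite big_split /= -mulr_suml.
have -> : \sum_(m : M) pi r m * (1 - rho m) =
          \sum_(m : M) pi r m - \sum_(m : M) pi r m * rho m.
  by rewrite -sumrB; apply: eq_bigr => m _; rewrite mulrBr mulr1.
set x := \sum_(m : M) pi r m * rho m; set S := \sum_(m : M) pi r m.
ring.
Qed.

Lemma uM_half_lower_bound pi :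
  (forall r, 0 <= e r) -> (forall r, \sum_(m : M) pi r m <= 1) ->
  (\sum_(r : M) e r) / 4 <= uM e d pi (fun _ => 1 / 2).
Proof.
move=> e_ge0 pi_sum_le1; rewrite /uM mulr_suml.
apply: ler_sum => r _; rewrite d_eq_e -mulr_suml.
have := pi_sum_le1 r; set S := \sum_(m : M) pi r m => S_le1.
have : 0 <= e r * (1 - S) by apply: mulr_ge0; rewrite ?e_ge0 ?subr_ge0.
lra.
Qed.

Lemma uM_existence rho :
  uM e d (fun _ m => e m) rho =
  (1 - \sum_(m : M) e m * rho m) * \sum_(m : M) e m * rho m.
Proof.
rewrite /uM mulr_sumr; apply: eq_bigr => r _; rewrite d_eq_e.
set y := \sum_(m : M) e m * rho m; ring.
Qed.

Lemma uM_existence_le rho : uM e d (fun _ m => e m) rho <= 1 / 4.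
Proof.
rewrite uM_existence; set y := \sum_(m : M) e m * rho m.
have : 0 <= (y - 1 / 2) ^+ 2 by apply: sqr_ge0.
nra.
Qed.

Lemma uM_existence_half :
  \sum_(r : M) e r = 1 -> uM e d (fun _ m => e m) (fun _ => 1 / 2) = 1 / 4.
Proof. by move=> sum_e; rewrite uM_existence -mulr_suml sum_e; lra. Qed.

End FullDefense.

Lemma M_strategy_half (R : realType) (M : finType) :
  M_strategy (fun _ : M => 1 / 2 : R).
Proof. by move=> m; lra. Qed.

Lemma naive_AM_existence (R : realType) (M : finType) (e : M -> R) :
  valid_e e -> naive_AM (fun _ m => e m).
Proof. by case=> e_01 sum_e; split=> //; split=> [r m|r]; rewrite ?sum_e. Qed.

Lemma best_response_value_ge (R : realType) (M : finType) (e d : M -> R) pi rho :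
  best_response e d pi rho -> uM e d pi (fun _ => 1 / 2) <= uM e d pi rho.
Proof. by case=> _ best; apply: best; exact: M_strategy_half. Qed.

Theorem theorem1 (R : realType) (M : finType) (e d : M -> R) :
  (0 < #|M|)%N -> valid_e e -> valid_d e d ->
  (forall r, d r = e r) ->
  let pistar : M -> M -> R := fun _ m => e m in
  let half : M -> R := fun _ => 1 / 2 in
  naive_AM pistar /\
  (* (i) *)
  (best_response e d pistar half /\
   (exists rho, M_strategy rho /\ uM e d pistar rho = 1 / 4) /\
   (forall rho, M_strategy rho -> uM e d pistar rho <= 1 / 4) /\
   (forall rho, best_response e d pistar rho -> uAM d pistar rho = 3 / 4)) /\
  (* (ii) *)
  (forall pi rho, naive_AM pi -> best_response e d pi rho ->
     uAM d pi rho <= 3 / 4) /\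
  (* consequence *)
  AM_optimal_in (@naive_AM R M) e d pistar half.
Proof.
move=> _ [e_01 sum_e] _ d_eq_e pistar half.
have e_ge0 r : 0 <= e r by case/andP: (e_01 r).
have uAM_eq pi rho := uAM_full_defense d_eq_e pi rho; rewrite sum_e in uAM_eq.
have value_half := uM_existence_half d_eq_e sum_e.
have br_half : best_response e d pistar half.
  by split=> [|rho _]; [exact: M_strategy_half | rewrite value_half uM_existence_le].
have AM_le pi rho : naive_AM pi -> best_response e d pi rho -> uAM d pi rho <= 3 / 4.
  case=> [[_ pi_sum_le1] _] /best_response_value_ge.
  have := uM_half_lower_bound d_eq_e pi e_ge0 pi_sum_le1.
  by rewrite uAM_eq sum_e mul1r; lra.
have AM_at_half : uAM d pistar half = 3 / 4 by rewrite uAM_eq value_half; lra.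
split; first exact: naive_AM_existence.
split; last split=> //.
- split=> //; split; first by exists half; split; [exact: M_strategy_half|].
  split=> [rho _|rho /best_response_value_ge]; first exact: uM_existence_le.
  by rewrite uAM_eq value_half; have := uM_existence_le d_eq_e rho; lra.
- split; first exact: naive_AM_existence.
  by split=> // pi' rho' naive' br'; rewrite AM_at_half AM_le.
Qed.
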